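(* Assume Dickson's conjecture. Then the set \[ \left\{ \frac{\varphi(p+1)}{\varphi(p-1)} \,:\, p \text{ and } p+2 \text{ are both prime} \right\} \] is dense in $[0,\infty)$.
   Context: $\varphi$ denotes Euler's totient function. Dickson's conjecture is the following assertion: if $f_1,\dots,f_k \in \mathbb{Z}[t]$ are linear polynomials with positive leading coefficients and the product $f=f_1f_2\cdots f_k$ does not vanish identically modulo any prime (i.e., for every prime $q$ there is an integer $t$ with $q \nmid f(t)$), then there are infinitely many positive integers $t$ for which $f_1(t),\dots,f_k(t)$ are simultaneously prime. *)

From mathcomp Require Import all_boot all_order all_algebra.
From mathcomp Require Import reals.
Set Implicit Arguments. Unset Strict Implicit. Unset Printing Implicit Defensive.
Import Order.TTheory GRing.Theory Num.Theory.
Local Open Scope ring_scope.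

Definition int_prime (z : int) : bool := (0 < z) && prime `|z|%N.

Definition linear_pos (f : {poly int}) : bool :=
  (size f == 2%N) && (0 < lead_coef f).

Definition Dickson_conjecture : Prop :=
  forall fs : seq {poly int},
    all linear_pos fs ->
    (forall q : nat, prime q ->
       exists t : int, ~~ (q%:Z %| (\prod_(f <- fs) f).[t])%Z) ->
    forall N : nat, exists t : nat,
      (N < t)%N /\ all (fun f => int_prime f.[t%:Z]) fs.

From mathcomp Require Import all_boot all_order all_algebra.
From mathcomp Require Import reals.
From mathcomp Require Import cyclic boolp sequences.
From mathcomp Require Import ring lra zify.
Import Order.TTheory GRing.Theory Num.Theory.

(* If p - 1 = 2 s q1 and p + 1 = 4 u q2 with q1, q2 primes larger than 2 s and 4 u, then
   phi(p + 1) / phi(p - 1) = 2 phi(u) (q2 - 1) / (phi(s) (q1 - 1)), and since 2 u q2 = s q1 + 1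
   this tends to (phi(u)/u) / (phi(s)/s) as q1 grows.  Dickson's conjecture, applied to the four
   linear forms in t giving q1, q2, p and p + 2, produces such twin primes with q1 arbitrarily
   large, the forms being admissible as soon as s is prime to 6, u is odd, 3 | u and (s, u) = 1.
   These quotients are dense in (0, oo): phi(b!)/b! * H_b <= 1 for the harmonic number H_b, so
   the product of 1 - 1/q over the primes q in (a, b] tends to 0 as b grows.  Taking s to be the
   product of the primes in (3, M] makes phi(s)/s small, and letting u = 3 * (product of the
   primes in (M, N]) absorb one prime at a time, phi(u)/u decreases by factors >= 1 - 1/M and so
   cannot jump over the target. *)

Definition prod_primes (a b : nat) : nat := \prod_(a.+1 <= p < b.+1 | prime p) p.

Lemma prod_primes_gt0 a b : 0 < prod_primes a b.
Proof. by apply: prodn_cond_gt0 => p /prime_gt0. Qed.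

Lemma prod_primes_cat {a b c : nat} :
  a <= b -> b <= c -> prod_primes a c = prod_primes a b * prod_primes b c.
Proof. by move=> ab bc; rewrite /prod_primes (big_cat_nat _ (n := b.+1)). Qed.

Lemma prod_primesnn a : prod_primes a a = 1.
Proof. by rewrite /prod_primes big_geq. Qed.

Lemma prod_primesS b : prod_primes b b.+1 = if prime b.+1 then b.+1 else 1.
Proof. by rewrite /prod_primes big_mkcond big_nat1. Qed.

Lemma prime_dvd_prod_primes q a b :
  prime q -> (q %| prod_primes a b) = (a < q <= b).
Proof.
move=> pq; apply/idP/idP => [|/andP[aq qb]].
  rewrite Euclid_dvd_prod // big_has_cond => /hasP[p].
  rewrite mem_index_iota => /andP[ap pb] /andP[pp].
  by rewrite dvdn_prime2 // => /eqP->; rewrite ap -ltnS.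
rewrite /prod_primes big_mkcond (big_cat_nat _ (n := q)) ?(leqW qb) //=.
by rewrite (@big_ltn _ _ _ q) ?ltnS //= pq dvdn_mull ?dvdn_mulr.
Qed.

Lemma coprime_prod_primes a b c d :
  b <= c -> coprime (prod_primes a b) (prod_primes c d).
Proof.
move=> bc; rewrite [prod_primes c d]/prod_primes big_seq_cond.
apply: (big_ind (coprime _)) => [|m n|p /andP[]].
- exact: coprimen1.
- by rewrite coprimeMr => ->.
rewrite mem_index_iota => /andP[cp _] pp.
rewrite coprime_sym prime_coprime // prime_dvd_prod_primes // negb_and.
by apply/orP; right; rewrite -ltnNge (leq_ltn_trans bc cp).
Qed.

Lemma prime_coprime_prod_primes q a b :
  prime q -> q <= a -> coprime q (prod_primes a b).
Proof.
by move=> pq qa; rewrite prime_coprime // prime_dvd_prod_primes // ltnNge qa.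
Qed.

Lemma sum_coprime_mul m k : \sum_(0 <= x < m * k) coprime m x = k * totient m.
Proof.
elim: k => [|k IHk]; first by rewrite muln0 big_geq.
rewrite mulnS (big_cat_nat _ (n := m * k)) ?leq_addl //= IHk.
rewrite -{1}[m * k]add0n big_addn addnK totient_count_coprime mulSn addnC.
congr (_ + _); apply: eq_bigr => x _.
by rewrite -coprime_modr addnC mulnC modnMDl coprime_modr.
Qed.

Lemma leq_totientMl d n : totient (d * n) <= d * totient n.
Proof.
rewrite totient_count_coprime -sum_coprime_mul mulnC.
by apply: leq_sum => x _; rewrite coprimeMl; case: (coprime n x); case: (coprime d x).
Qed.

Lemma coprime_dvd_primes {m k x : nat} : 0 < k ->
  (forall q, prime q -> q %| k -> q %| m) -> coprime m x -> coprime k x.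
Proof.
move=> k_gt0 km mx; apply: contraT => not_kx.
have g_gt1 : 1 < gcdn k x by rewrite ltn_neqAle eq_sym not_kx gcdn_gt0 k_gt0.
have := pdiv_dvd (gcdn k x); rewrite dvdn_gcd => /andP[qk qx].
have : pdiv (gcdn k x) %| gcdn m x by rewrite dvdn_gcd qx km ?pdiv_prime.
by rewrite (eqP mx) dvdn1 => /eqP q1; move: (pdiv_prime g_gt1); rewrite q1.
Qed.

Lemma totient_mul_dvd_primes m k : 0 < k ->
  (forall q, prime q -> q %| k -> q %| m) -> totient (m * k) = k * totient m.
Proof.
move=> k_gt0 km; rewrite totient_count_coprime -sum_coprime_mul.
apply: eq_bigr => x _; rewrite coprimeMl.
by case mx: (coprime m x); rewrite // (coprime_dvd_primes k_gt0 km mx).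
Qed.

Lemma totient_mul_prime m q : prime q -> 0 < m < q -> totient (m * q) = totient m * q.-1.
Proof.
move=> pq /andP[m_gt0 mq].
have mq_coprime : coprime m q by rewrite coprime_sym prime_coprime // gtnNdvd.
by rewrite totient_coprime // (totient_prime pq).
Qed.

Lemma prime_dvd_fact q b : prime q -> (q %| b`!) = (q <= b).
Proof.
move=> pq; apply/idP/idP => [|qb]; last by rewrite dvdn_fact // prime_gt0.
rewrite fact_prod Euclid_dvd_prod // big_has => /hasP[i].
rewrite mem_index_iota => /andP[i_gt0 ib] /dvdn_leq qi.
exact: leq_trans (qi i_gt0) _.
Qed.
Lemma sum_totient_quotients_leq n b : 0 < n ->
  (forall d, 0 < d <= b -> d %| n) -> \sum_(1 <= d < b.+1) totient (n %/ d) <= n.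
Proof.
move=> n_gt0 dvd_n.
rewrite -(big_map (divn n) xpredT totient) -{2}(sum_totient_dvd n).
rewrite -(big_mkord (dvdn^~ n) totient) -[leqRHS]big_filter.
apply: (uniq_sub_le_big leqnn (fun m n => leq_addr n m)).
- rewrite map_inj_in_uniq ?iota_uniq // => d1 d2.
  rewrite !mem_index_iota => /andP[d1_gt0 d1b] /andP[d2_gt0 d2b] eq_quot.
  have d1n : d1 %| n by rewrite dvd_n // d1_gt0 -ltnS.
  have d2n : d2 %| n by rewrite dvd_n // d2_gt0 -ltnS.
  have quot_gt0 : 0 < n %/ d1 by rewrite divn_gt0 // dvdn_leq.
  by apply/eqP; rewrite -(eqn_pmul2l quot_gt0) {2}eq_quot !divnK.
- by rewrite filter_uniq ?iota_uniq.
move=> e /mapP[d]; rewrite mem_index_iota => /andP[d_gt0 db] ->.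
by rewrite mem_filter mem_index_iota ltnS leq_div dvdn_div // dvd_n // d_gt0.
Qed.

Lemma exists_crossing (P : pred nat) {m n : nat} :
  m <= n -> P m -> ~~ P n -> exists k, [/\ m <= k < n, P k & ~~ P k.+1].
Proof.
elim: n => [|n IHn] mn Pm nPn.
  by move: mn; rewrite leqn0 => /eqP m0; rewrite -m0 Pm in nPn.
have {}mn : m <= n.
  rewrite leqNgt; apply: contraNN nPn => nm.
  by have /eqP <- : m == n.+1 by rewrite eqn_leq mn.
have [Pn|nPn'] := boolP (P n); first by exists n; rewrite mn ltnSn.
by have [k [/andP[mk kn] Pk nPk]] := IHn mn Pm nPn'; exists k; rewrite mk ltnS ltnW.
Qed.

Lemma card_linear_roots_mod q a b : prime q -> coprime a b ->
  #|[set t : 'I_q | q %| a * t + b]| <= ~~ (q %| a).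
Proof.
move=> pq ab; have [qa|qNa] := boolP (q %| a).
  rewrite /= leqn0 cards_eq0; apply/eqP/setP => t; rewrite !inE dvdn_addr ?dvdn_mulr //.
  by have := coprime_dvdl qa ab; rewrite prime_coprime // => /negPf.
have qa : coprime q a by rewrite prime_coprime.
have no_two_roots (x y : 'I_q) : x < y -> q %| a * x + b -> q %| a * y + b -> False.
  move=> xy rx ry; have : q %| y - x.
    by rewrite -(Gauss_dvdr _ qa) mulnBr -(subnDr b) dvdn_sub.
  by rewrite gtnNdvd ?subn_gt0 // (leq_ltn_trans (leq_subr _ _) (ltn_ord y)).
apply/card_le1_eqP => t1 t2; rewrite !inE => r1 r2; apply/val_inj.
by case: (ltngtP t1 t2) => [/no_two_roots/(_ r1 r2)|/no_two_roots/(_ r2 r1)|].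
Qed.

Lemma linear_forms_avoid_prime q (L : seq (nat * nat)) : prime q ->
  all (fun ab => coprime ab.1 ab.2) L -> count (fun ab => ~~ (q %| ab.1)) L < q ->
  exists t, all (fun ab => ~~ (q %| ab.1 * t + ab.2)) L.
Proof.
move=> pq coprime_L count_L.
pose roots L' := [set t : 'I_q | has (fun ab => q %| ab.1 * t + ab.2) L'].
have card_roots : #|roots L| <= count (fun ab => ~~ (q %| ab.1)) L.
  elim: L coprime_L {count_L} => [_|[a b] L IHL /andP[ab coprime_L]] /=.
    by rewrite leqn0 cards_eq0; apply/eqP/setP => t; rewrite !inE.
  have -> : roots ((a, b) :: L) = [set t : 'I_q | q %| a * t + b] :|: roots L.
    by apply/setP => t; rewrite !inE.
  rewrite cardsU (leq_trans (leq_subr _ _)) // leq_add //; last exact: IHL.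
  exact: card_linear_roots_mod.
have : 0 < #|~: roots L|.
  by rewrite -(ltn_add2l #|roots L|) addn0 cardsC card_ord (leq_ltn_trans card_roots).
by case/card_gt0P => t; rewrite !inE -all_predC; exists t.
Qed.

(* The pair (a, b) stands for the form a t + b.  When a s + 1 = 2 u c, the four forms are
   q1 = 2 u t + a, q2 = s t + c, p and p + 2, where p - 1 = 2 s q1 and p + 1 = 4 u q2. *)
Definition twin_forms (s u a c : nat) : seq (nat * nat) :=
  [:: (2 * u, a); (s, c); (4 * s * u, 2 * s * a + 1); (4 * s * u, 2 * s * a + 3)].

Lemma twin_forms_coprime s u a c : coprime 3 s -> (a * s).+1 = c * (2 * u) ->
  all (fun ab => coprime ab.1 ab.2) (twin_forms s u a c).
Proof.
move=> s3 bezout /=; rewrite andbT.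
have coprime_dvdS d x : d %| x.+1 -> coprime d x.
  by move=> dx; exact: coprime_dvdl dx (coprimeSn x).
have coprime_mulD d k r : coprime d (k * d + r) = coprime d r.
  by rewrite -coprime_modr modnMDl coprime_modr.
have coprime4_odd n : odd n -> coprime 4 n.
  by move=> odd_n; rewrite -[4]/(2 ^ 2) coprime_pexpl // coprime2n.
have c2u_a : coprime (2 * u) a.
  have : coprime (2 * u) (a * s) by apply: coprime_dvdS; rewrite bezout dvdn_mull.
  by rewrite coprimeMr => /andP[].
have cs_c : coprime s c.
  have : coprime c (a * s) by apply: coprime_dvdS; rewrite bezout dvdn_mulr.
  by rewrite coprime_sym coprimeMl => /andP[].
have -> : 2 * s * a = 2 * a * s by rewrite mulnAC.
have u_next : (2 * a * s + 1).+1 = 4 * c * u by lia.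
have u_succ : 2 * a * s + 3 = 4 * c * u + 1 by lia.
rewrite c2u_a cs_c !coprimeMl !coprime4_odd ?oddD ?oddM //= !coprime_mulD.
rewrite coprimen1 coprime_dvdS ?u_next ?dvdn_mull // coprime_sym s3.
by rewrite u_succ coprime_mulD coprimen1.
Qed.

Lemma twin_forms_admissible s u a c q : coprime 3 s -> 3 %| u ->
  (a * s).+1 = c * (2 * u) -> prime q ->
  exists t, all (fun ab => ~~ (q %| ab.1 * t + ab.2)) (twin_forms s u a c).
Proof.
move=> s3 u3 bezout pq; apply: linear_forms_avoid_prime => //.
  exact: twin_forms_coprime.
have [q_big|q_small] := ltnP 4 q.
  exact: leq_ltn_trans (count_size _ (twin_forms s u a c)) q_big.
have q_2u : q %| 2 * u.
  have : q \in [:: 2; 3] by move: q_small pq; case: q => [|[|[|[|[|]]]]].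
  by rewrite !inE => /orP[] /eqP->; [exact: dvdn_mulr | exact: dvdn_mull].
have q_4su : q %| 4 * s * u.
  by rewrite (dvdn_trans q_2u) // dvdn_mul // dvdn_mulr.
rewrite /= q_2u q_4su /= add0n addn0.
by case: (q %| s); rewrite ?prime_gt0 ?prime_gt1.
Qed.

Section LinearPolynomials.
Local Open Scope ring_scope.

Definition linear_poly_nat (ab : nat * nat) : {poly int} :=
  (ab.1%:Z)%:P * 'X + (ab.2%:Z)%:P.

Lemma linear_poly_natE ab (t : nat) :
  (linear_poly_nat ab).[t%:Z] = (ab.1 * t + ab.2)%N%:Z.
Proof. by rewrite hornerMXaddC hornerC PoszD PoszM. Qed.

Lemma linear_pos_linear_poly_nat ab : (0 < ab.1)%N -> linear_pos (linear_poly_nat ab).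
Proof.
case: ab => a b /= a_gt0; have aZ : a%:Z != 0 by rewrite eqz_nat -lt0n.
have size_aX : size ((a%:Z)%:P * 'X) = 2 by rewrite size_mulX ?polyC_eq0 // size_polyC aZ.
have size_b : (size ((b%:Z)%:P) < size ((a%:Z)%:P * 'X)%R)%N.
  by rewrite size_aX ltnS size_polyC leq_b1.
rewrite /linear_pos /linear_poly_nat /= size_addl // lead_coefDl //.
by rewrite size_aX lead_coefMX lead_coefC ltz_nat.
Qed.

End LinearPolynomials.

Lemma dickson_linear_forms (L : seq (nat * nat)) N : Dickson_conjecture ->
  all (fun ab => 0 < ab.1) L ->
  (forall q, prime q -> exists t, all (fun ab => ~~ (q %| ab.1 * t + ab.2)) L) ->
  exists t, N < t /\ all (fun ab => prime (ab.1 * t + ab.2)) L.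
Proof.
move=> dickson lead_gt0 admissible.
have [|q pq|t [Nt all_prime]] := dickson (map linear_poly_nat L) _ _ N.
- by rewrite all_map; apply/allP => ab /(allP lead_gt0); exact: linear_pos_linear_poly_nat.
- have [t ht] := admissible q pq; exists (Posz t).
  rewrite big_map horner_prod (eq_bigr _ (fun ab _ => linear_poly_natE ab t)).
  rewrite -(big_morph Posz PoszM (erefl (Posz 1))) dvdzE /=.
  by rewrite Euclid_dvd_prod // big_has -all_predC.
exists t; split => //; move: all_prime; rewrite all_map.
by apply: sub_all => ab; rewrite /= linear_poly_natE /int_prime => /andP[].
Qed.

Definition twin_params (s u : nat) : bool :=
  [&& odd s, coprime 3 s, odd u, 3 %| u & coprime s u].

Lemma twin_primes_pattern s u N : Dickson_conjecture -> twin_params s u ->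
  exists p X Y, [/\ prime p, prime p.+2 & N < X] /\
    [/\ totient p.-1 = totient s * X, totient p.+1 = 2 * totient u * Y
       & 2 * u * Y.+1 = s * X.+1 + 1].
Proof.
move=> dickson /and5P[odd_s s3 odd_u u3 su].
have [s_gt0 u_gt0] := (odd_gt0 odd_s, odd_gt0 odd_u).
have two_u_gt0 : 0 < 2 * u by rewrite muln_gt0.
have [a _] := Bezoutl s two_u_gt0.
have /eqP-> : coprime (2 * u) s by rewrite coprimeMl coprime2n odd_s coprime_sym.
rewrite add1n => /dvdnP[c bezout].
have [|q pq|t [Nt]] := dickson_linear_forms (twin_forms s u a c) (N + 2 * s + 4 * u)
  dickson _ _.
- by rewrite /= !muln_gt0 s_gt0 u_gt0.
- exact: twin_forms_admissible.
move=> /= /and5P[q1_prime q2_prime p_prime p2_prime _].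
have [X q1E] : exists X, 2 * u * t + a = X.+1.
  by exists (2 * u * t + a).-1; rewrite prednK // prime_gt0.
have [Y q2E] : exists Y, s * t + c = Y.+1.
  by exists (s * t + c).-1; rewrite prednK // prime_gt0.
rewrite q1E in q1_prime; rewrite q2E in q2_prime.
have ut : t <= u * t := leq_pmull t u_gt0.
have st : t <= s * t := leq_pmull t s_gt0.
exists (4 * s * u * t + (2 * s * a + 1)), X, Y.
have -> : (4 * s * u * t + (2 * s * a + 1)).+2 = 4 * s * u * t + (2 * s * a + 3) by lia.
have -> : (4 * s * u * t + (2 * s * a + 1)).-1 = 2 * s * X.+1 by lia.
have -> : (4 * s * u * t + (2 * s * a + 1)).+1 = 4 * u * Y.+1 by lia.
split; first by split => //; lia.
split; last by lia.
- rewrite totient_mul_prime //; last by lia.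
  by rewrite totient_coprime ?coprime2n // mul1n.
- rewrite totient_mul_prime //; last by lia.
  by rewrite totient_coprime // -[4]/(2 ^ 2) coprime_pexpl // coprime2n.
Qed.

Section TotientRatio.
Variable R : realType.
Local Open Scope ring_scope.

Definition totient_ratio (n : nat) : R := (totient n)%:R / n%:R.

Lemma totient_ratioM m n :
  coprime m n -> totient_ratio (m * n) = totient_ratio m * totient_ratio n.
Proof. by move=> mn; rewrite /totient_ratio totient_coprime // !natrM invfM mulrACA. Qed.

Lemma totient_ratio1 : totient_ratio 1 = 1.
Proof. by rewrite /totient_ratio divr1. Qed.

Lemma totient_ratio_gt0 n : (0 < n)%N -> 0 < totient_ratio n.
Proof. by move=> n_gt0; rewrite divr_gt0 // ltr0n // totient_gt0. Qed.

Lemma totient_ratio_ge0 n : 0 <= totient_ratio n.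
Proof. by rewrite divr_ge0. Qed.

Lemma totient_ratio_le1 n : totient_ratio n <= 1.
Proof.
have [->|n_gt0] := posnP n; first by rewrite /totient_ratio invr0 mulr0.
rewrite ler_pdivrMr ?ltr0n // mul1r ler_nat.
by have := leq_totientMl n 1; rewrite !muln1.
Qed.

Lemma totient_ratio_prod_primesS b :
  1 - (b.+1%:R)^-1 <= totient_ratio (prod_primes b b.+1).
Proof.
rewrite prod_primesS; case: ifP => [pb|_]; last first.
  by rewrite totient_ratio1 lerBlDr lerDl invr_ge0.
have -> : totient_ratio b.+1 = 1 - (b.+1%:R)^-1.
  by rewrite /totient_ratio totient_prime // -natr1 /=; field; rewrite natr1 pnatr_eq0.
exact: lexx.
Qed.

Lemma totient_ratio_fact b : totient_ratio b`! = totient_ratio (prod_primes 0 b).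
Proof.
set P := prod_primes 0 b.
have same_primes q : prime q -> (q %| b`!)%N = (q %| P)%N.
  by move=> pq; rewrite prime_dvd_fact // prime_dvd_prod_primes // prime_gt0.
have P_fact : totient (b`! * P) = (P * totient b`!)%N.
  by apply: totient_mul_dvd_primes; rewrite ?prod_primes_gt0 // => q pq; rewrite same_primes.
have fact_P : totient (P * b`!) = (b`! * totient P)%N.
  by apply: totient_mul_dvd_primes; rewrite ?fact_gt0 // => q pq; rewrite same_primes.
apply/eqP; rewrite eqr_div ?pnatr_eq0 -?lt0n ?fact_gt0 ?prod_primes_gt0 //.
by rewrite -!natrM eqr_nat; apply/eqP; rewrite mulnC -P_fact mulnC fact_P mulnC.
Qed.

Lemma totient_ratio_fact_harmonic b :
  totient_ratio b`! * \sum_(1 <= d < b.+1) (d%:R)^-1 <= 1.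
Proof.
(* phi(n) <= d phi(n/d), and the n/d are distinct divisors of n, whose totients sum to n. *)
set n := b`!; have n_gt0 : (0 < n)%N := fact_gt0 b.
have dvd_n d : (0 < d <= b)%N -> (d %| n)%N by move=> /dvdn_fact.
rewrite mulr_sumr; apply: (le_trans (y := \sum_(1 <= d < b.+1) (totient (n %/ d))%:R / n%:R)).
- apply: ler_sum_nat => d /andP[d_gt0 db].
  have dn : (d %| n)%N by rewrite dvd_n // d_gt0 -ltnS.
  rewrite /totient_ratio mulrAC ler_wpM2r ?invr_ge0 // ler_pdivrMr ?ltr0n //.
  by rewrite -natrM ler_nat -{1}(divnK dn) mulnC [leqRHS]mulnC leq_totientMl.
- by rewrite -mulr_suml -natr_sum ler_pdivrMr ?ltr0n // mul1r ler_nat sum_totient_quotients_leq.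
Qed.

Lemma harmonic_sum_unbounded (B : R) : exists b, B < \sum_(1 <= d < b.+1) (d%:R)^-1.
Proof.
suff [b Bb] : exists b, B < series (@harmonic R) b.
  by exists b; rewrite big_add1 /=; move: Bb; rewrite seriesEnat.
apply: contrapT => /forallNP B_ub; apply: (@dvg_harmonic R).
apply: nondecreasing_is_cvgn.
  by rewrite seriesEnat; apply: nondecreasing_series => n _ _; exact: harmonic_ge0.
by exists B => _ [b _ <-]; rewrite leNgt; apply/negP/B_ub.
Qed.

Lemma totient_ratio_prod_primes_cat a b c : (a <= b <= c)%N ->
  totient_ratio (prod_primes a c) =
  totient_ratio (prod_primes a b) * totient_ratio (prod_primes b c).
Proof.
by case/andP=> ab bc; rewrite (prod_primes_cat ab bc) totient_ratioM ?coprime_prod_primes.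
Qed.

Lemma totient_ratio_prod_primes_small a (e : R) : 0 < e ->
  exists b0, forall b, (b0 <= b)%N -> totient_ratio (prod_primes a b) < e.
Proof.
move=> e_gt0; set g := totient_ratio (prod_primes 0 a).
have g_gt0 : 0 < g by rewrite totient_ratio_gt0 ?prod_primes_gt0.
have eg_gt0 : 0 < e * g := mulr_gt0 e_gt0 g_gt0.
have [n Hn] := harmonic_sum_unbounded (e * g)^-1.
exists (maxn a n) => b; rewrite geq_max => /andP[ab nb].
have H_gt0 : 0 < \sum_(1 <= d < n.+1) (d%:R : R)^-1.
  by apply: lt_trans Hn; rewrite invr_gt0.
have small_n : totient_ratio (prod_primes 0 n) < e * g.
  rewrite -totient_ratio_fact -(ltr_pM2r H_gt0).
  apply: le_lt_trans (totient_ratio_fact_harmonic n) _.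
  by rewrite -ltr_pdivrMl // mulr1.
rewrite -(ltr_pM2l g_gt0) -totient_ratio_prod_primes_cat ?ab // mulrC.
apply: le_lt_trans small_n.
rewrite (totient_ratio_prod_primes_cat 0 n b) ?nb //.
by rewrite ler_piMr ?totient_ratio_ge0 ?totient_ratio_le1.
Qed.

Lemma totient_ratio_crossing M (z : R) : (3 <= M)%N -> 0 < z -> z <= totient_ratio 3 ->
  exists k, (M <= k)%N /\
    z * (1 - (k.+1%:R)^-1) <= totient_ratio (3 * prod_primes M k.+1) < z.
Proof.
move=> M3 z_gt0 z_le3; pose f N := totient_ratio (3 * prod_primes M N).
have g3_gt0 : 0 < totient_ratio 3 by exact: totient_ratio_gt0.
have fE N : f N = totient_ratio 3 * totient_ratio (prod_primes M N).
  by rewrite /f totient_ratioM // prime_coprime_prod_primes.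
have [N small] := totient_ratio_prod_primes_small M _ (divr_gt0 z_gt0 g3_gt0).
have fM : z <= f M by rewrite fE prod_primesnn totient_ratio1 mulr1.
have fN : ~~ (z <= f (maxn M N)).
  by rewrite -ltNge fE mulrC -ltr_pdivlMr // small // leq_maxr.
have [k [/andP[Mk _] fk /negP/negP]] := exists_crossing (fun N => z <= f N)
  (leq_maxl M N) fM fN.
rewrite -ltNge => fk1; exists k; split => //; rewrite -/(f k.+1) fk1 andbT.
have -> : f k.+1 = f k * totient_ratio (prod_primes k k.+1).
  by rewrite !fE (totient_ratio_prod_primes_cat M k k.+1) ?Mk ?leqnSn // mulrA.
apply: (ler_pM (ltW z_gt0) _ fk (totient_ratio_prod_primesS k)).
by rewrite subr_ge0 invf_le1 ?ler1n ?ltr0n.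
Qed.

Lemma totient_ratio_quotient_dense (y d : R) : 0 < y -> 0 < d ->
  exists s u, twin_params s u /\ `|totient_ratio u / totient_ratio s - y| < d.
Proof.
move=> y_gt0 d_gt0; have g3_gt0 : 0 < totient_ratio 3 by exact: totient_ratio_gt0.
have [M0 small_s] := totient_ratio_prod_primes_small 3 _ (divr_gt0 g3_gt0 y_gt0).
pose K := Num.Def.archi_bound (y / d).
have yK : y / d < K%:R by apply: archi_boundP; rewrite divr_ge0 ?ltW.
pose M := maxn 3 (maxn M0 K).
have [M3 M0M KM] : [/\ 3 <= M, M0 <= M & K <= M]%N.
  by rewrite /M !leq_max !leqnn !orbT.
pose s := prod_primes 3 M; pose gs := totient_ratio s.
have gs_gt0 : 0 < gs by rewrite totient_ratio_gt0 ?prod_primes_gt0.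
have ygs_le3 : y * gs <= totient_ratio 3.
  by rewrite mulrC -ler_pdivlMr // ltW // small_s.
have [k [Mk /andP[u_ge u_lt]]] :=
  totient_ratio_crossing M _ M3 (mulr_gt0 y_gt0 gs_gt0) ygs_le3.
exists s, (3 * prod_primes M k.+1)%N; split.
  rewrite /twin_params -!coprime2n !coprimeMr [coprime s 3]coprime_sym.
  by rewrite coprime_prod_primes // !prime_coprime_prod_primes ?dvdn_mulr // ltnW.
set e := y / k.+1%:R.
have e_lt : e < d.
  rewrite ltr_pdivrMr // mulrC -ltr_pdivrMr //; apply: lt_le_trans yK _.
  by rewrite ler_nat (leq_trans KM) // ltnW.
have ratio_ge : y - e <= totient_ratio (3 * prod_primes M k.+1) / gs.
  by rewrite ler_pdivlMr // (le_trans _ u_ge) // mulrBl mulrBr mulr1 mulrAC.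
have ratio_lt : totient_ratio (3 * prod_primes M k.+1) / gs < y by rewrite ltr_pdivrMr.
by rewrite ltr_norml; apply/andP; split; lra.
Qed.

End TotientRatio.

Section TwinRatio.
Local Open Scope ring_scope.

Lemma twin_ratio_error {F : numFieldType} {fu fs u s x y : F} :
  u != 0 -> s != 0 -> fs != 0 -> x != 0 -> 2 * u * (y + 1) = s * (x + 1) + 1 ->
  2 * fu * y / (fs * x) - fu / u / (fs / s) =
  fu / u / (fs / s) * ((s + 1 - 2 * u) / (s * x)).
Proof.
move=> u0 s0 fs0 x0 rel; have two0 : (2 : F) != 0 by rewrite pnatr_eq0.
have -> : y = (s * (x + 1) + 1) / (2 * u) - 1.
  by rewrite -rel; field.
by field; rewrite x0 s0 fs0 u0.
Qed.

Lemma twin_ratio_error_le {F : realFieldType} {c u s x : F} :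
  0 <= c -> 0 <= u -> 1 <= s -> 0 < x ->
  `|c * ((s + 1 - 2 * u) / (s * x))| <= c * (s + 1 + 2 * u) / x.
Proof.
move=> c_ge0 u_ge0 s_ge1 x_gt0; have s_gt0 : 0 < s by apply: lt_le_trans s_ge1.
rewrite normrM ger0_norm // -mulrA; apply: ler_wpM2l => //.
have sx_ge0 : 0 <= s * x by rewrite mulr_ge0 // ltW.
rewrite normrM normfV [`|s * x|]ger0_norm // invfM mulrA.
rewrite ler_pM2r ?invr_gt0 // ler_pdivrMr // (le_trans _ (ler_peMr _ s_ge1)) //; last by lra.
by rewrite ler_norml; apply/andP; split; lra.
Qed.

Variable R : realType.

Lemma twin_totient_ratio_approx (s u : nat) (eps : R) :
  Dickson_conjecture -> twin_params s u -> 0 < eps ->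
  exists p, [/\ prime p, prime p.+2 &
    `|(totient p.+1)%:R / (totient p.-1)%:R - totient_ratio R u / totient_ratio R s| < eps].
Proof.
move=> dickson su eps_gt0.
have [s_gt0 u_gt0] : (0 < s)%N /\ (0 < u)%N.
  by case/and5P: su => odd_s _ odd_u _ _; rewrite !odd_gt0.
pose C := totient_ratio R u / totient_ratio R s.
have C_ge0 : 0 <= C by rewrite divr_ge0 ?totient_ratio_ge0.
pose D : R := (s + 1 + 2 * u)%:R.
have CDe_ge0 : 0 <= C * D / eps := divr_ge0 (mulr_ge0 C_ge0 (ler0n _ _)) (ltW eps_gt0).
have [p [X [Y [[p_prime p2_prime NX] [phi_pred phi_succ rel]]]]] :=
  twin_primes_pattern s u (Num.Def.archi_bound (C * D / eps)) dickson su.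
exists p; split => //.
have X_large : C * D / eps < X%:R.
  by apply: lt_le_trans (archi_boundP CDe_ge0) _; rewrite ler_nat ltnW.
have X_gt0 : 0 < X%:R :> R := le_lt_trans CDe_ge0 X_large.
have X_pos : (0 < X)%N := leq_ltn_trans (leq0n _) NX.
have relR : 2 * u%:R * (Y%:R + 1) = s%:R * (X%:R + 1) + 1 :> R.
  by apply/eqP; rewrite !natr1 -!natrM natr1 eqr_nat rel addn1.
rewrite phi_pred phi_succ !natrM (twin_ratio_error _ _ _ _ relR) ?lt0r_neq0 ?ltr0n ?totient_gt0 //.
rewrite -/(totient_ratio R u) -/(totient_ratio R s) -/C.
have s_ge1 : 1 <= s%:R :> R by rewrite ler1n.
apply: le_lt_trans (twin_ratio_error_le C_ge0 (ler0n _ u) s_ge1 X_gt0) _.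
have -> : s%:R + 1 + 2 * u%:R = D by rewrite /D natrD natrM natrD.
by rewrite ltr_pdivrMr // [eps * _]mulrC -ltr_pdivrMr.
Qed.

End TwinRatio.

Local Open Scope ring_scope.

Theorem theorem1 (R : realType) :
  Dickson_conjecture ->
  forall (x eps : R), 0 <= x -> 0 < eps ->
    exists p : nat, [/\ prime p, prime p.+2 &
      `| (totient p.+1)%:R / (totient p.-1)%:R - x | < eps].
Proof.
move=> dickson x eps x_ge0 eps_gt0.
have y_gt0 : 0 < x + eps / 4 by lra.
have [|s [u [su close_su]]] := @totient_ratio_quotient_dense R _ (eps / 4) y_gt0.
  by lra.
have [|p [p_prime p2_prime close_p]] := twin_totient_ratio_approx R s u (eps / 2) dickson su.
  by lra.
exists p; split => //.
move: close_su close_p; rewrite !ltr_norml.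
move: (totient_ratio R u / totient_ratio R s) ((totient p.+1)%:R / (totient p.-1)%:R).
by move=> c r /andP[? ?] /andP[? ?]; apply/andP; split; lra.
Qed.
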